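(* Let $\mathcal B^L_\Omega,\mathcal B^P_\Omega>0$ be constants such that $\|P_{L'}^*-P_L^*\|\le\mathcal B^P_\Omega\|L'-L\|$ whenever $L,L'\in\Omega$ and $\|L'-L\|\le\mathcal B^L_\Omega$ (such constants exist under the standing assumptions), and assume $B\ne0$, $C\ne0$. For any $L,L'\in\Omega$ with $$\|L'-L\|\le\min\Big\{\mathcal B^L_\Omega,\ \frac{\|B\|(\mathcal B^P_\Omega\|\tilde A_L-BK(L)\|+\|P_L^*\|\|C\|)}{\mathcal B^P_\Omega\|B\|\|C\|}\Big\},$$ it holds that $\|K(L')-K(L)\|\le\dfrac{2\|B\|(\mathcal B^P_\Omega\|\tilde A_L-BK(L)\|+\|P_L^*\|\|C\|)}{\sigma_{\min}(R^u)}\|L'-L\|$.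
   Context: Zero-sum LQ game: $A\in\mathbb R^{d\times d}$, $B\in\mathbb R^{d\times m_1}$, $C\in\mathbb R^{d\times m_2}$, symmetric positive definite $Q,R^u,R^v$. For $L$ with $Q-L^\top R^vL\succ0$: $\tilde A_L=A-CL$, $P_L^*\succ0$ is the stabilizing solution of $P=Q-L^\top R^vL+\tilde A_L^\top P\tilde A_L-\tilde A_L^\top PB(R^u+B^\top PB)^{-1}B^\top P\tilde A_L$, and $K(L)=(R^u+B^\top P_L^*B)^{-1}B^\top P_L^*\tilde A_L$. Standing assumptions: $\mathbb E[x_0x_0^\top]\succ0$; the GARE $P=A^\top PA+Q-[A^\top PB\ \ A^\top PC]\begin{bmatrix}R^u+B^\top PB & B^\top PC\\ C^\top PB & -R^v+C^\top PC\end{bmatrix}^{-1}\begin{bmatrix}B^\top PA\\ C^\top PA\end{bmatrix}$ has a minimal positive definite solution $P^*$ with $R^v-C^\top P^*C\succ0$, and $Q-(L^* )^\top R^vL^*\succ0$ for $L^*=[-R^v+C^\top P^*C-C^\top P^*B(R^u+B^\top P^*B)^{-1}B^\top P^*C]^{-1}[C^\top P^*A-C^\top P^*B(R^u+B^\top P^*B)^{-1}B^\top P^*A]$. $0<\zeta<\sigma_{\min}(Q-(L^* )^\top R^vL^* )$, $\Omega=\{L:Q-L^\top R^vL\succeq\zeta I\}$. $\|\cdot\|$ is the spectral norm. *)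

From HB Require Import structures.
From mathcomp Require Import all_boot all_order all_algebra.
From Stdlib Require Import ClassicalEpsilon.
Set Implicit Arguments. Unset Strict Implicit. Unset Printing Implicit Defensive.
Import Order.TTheory GRing.Theory Num.Theory.
Local Open Scope ring_scope.

Section LQDefs.
Variable R : rcfType.

Definition vnorm n (x : 'cV[R]_n) : R := Num.sqrt (\sum_i (x i 0) ^+ 2).

Definition is_opnorm m n (A : 'M[R]_(m, n)) (c : R) : Prop :=
  (forall x : 'cV[R]_n, vnorm (A *m x) <= c * vnorm x) /\
  (forall c' : R, (forall x : 'cV[R]_n, vnorm (A *m x) <= c' * vnorm x) -> c <= c').

Definition opnorm m n (A : 'M[R]_(m, n)) : R :=
  match excluded_middle_informative (exists c, is_opnorm A c) with
  | left H => proj1_sig (constructive_indefinite_description _ H)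
  | right _ => 0
  end.

Definition is_sigmin n (A : 'M[R]_n) (c : R) : Prop :=
  (forall x : 'cV[R]_n, c * vnorm x <= vnorm (A *m x)) /\
  (forall c' : R, (forall x : 'cV[R]_n, c' * vnorm x <= vnorm (A *m x)) -> c' <= c).

Definition sigmin n (A : 'M[R]_n) : R :=
  match excluded_middle_informative (exists c, is_sigmin A c) with
  | left H => proj1_sig (constructive_indefinite_description _ H)
  | right _ => 0
  end.

Definition qf n (M : 'M[R]_n) (x : 'cV[R]_n) : R := (x^T *m M *m x) 0 0.

Definition posdef n (M : 'M[R]_n) : Prop :=
  M^T = M /\ forall x : 'cV[R]_n, x != 0 -> 0 < qf M x.

Definition mx_ge n (M N : 'M[R]_n) : Prop := forall x : 'cV[R]_n, qf N x <= qf M x.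

Definition mxpow n (M : 'M[R]_n) (k : nat) : 'M[R]_n := iter k (mulmx M) 1%:M.

(* Schur stability: M^k -> 0 (equivalently spectral radius < 1) *)
Definition schur_stable n (M : 'M[R]_n) : Prop :=
  forall eps : R, 0 < eps -> exists N : nat, forall k : nat, (N <= k)%N ->
    forall i j, `|mxpow M k i j| < eps.

Section Game.
Variables (d m1 m2 : nat) (A : 'M[R]_d) (B : 'M[R]_(d, m1)) (C : 'M[R]_(d, m2))
  (Q : 'M[R]_d) (Ru : 'M[R]_m1) (Rv : 'M[R]_m2).

Definition Atil (L : 'M[R]_(m2, d)) : 'M[R]_d := A - C *m L.

(* K(L) computed from a matrix P (to be instantiated with P_L^* ) *)
Definition Kof (P : 'M[R]_d) (L : 'M[R]_(m2, d)) : 'M[R]_(m1, d) :=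
  invmx (Ru + B^T *m P *m B) *m B^T *m P *m Atil L.

Definition ric_rhs (P : 'M[R]_d) (L : 'M[R]_(m2, d)) : 'M[R]_d :=
  Q - L^T *m Rv *m L + (Atil L)^T *m P *m Atil L
  - (Atil L)^T *m P *m B *m invmx (Ru + B^T *m P *m B) *m B^T *m P *m Atil L.

Definition stabilizing_sol (L : 'M[R]_(m2, d)) (P : 'M[R]_d) : Prop :=
  posdef P /\ P = ric_rhs P L /\ schur_stable (Atil L - B *m Kof P L).

Definition gare_rhs (P : 'M[R]_d) : 'M[R]_d :=
  A^T *m P *m A + Q
  - row_mx (A^T *m P *m B) (A^T *m P *m C)
    *m invmx (block_mx (Ru + B^T *m P *m B) (B^T *m P *m C)
                       (C^T *m P *m B) (- Rv + C^T *m P *m C))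
    *m col_mx (B^T *m P *m A) (C^T *m P *m A).

Definition gare_sol (P : 'M[R]_d) : Prop := P = gare_rhs P.

Definition gare_minimal_pd (P : 'M[R]_d) : Prop :=
  posdef P /\ gare_sol P /\ forall P', posdef P' -> gare_sol P' -> mx_ge P' P.

Definition Lstar (P : 'M[R]_d) : 'M[R]_(m2, d) :=
  invmx (- Rv + C^T *m P *m C
         - C^T *m P *m B *m invmx (Ru + B^T *m P *m B) *m B^T *m P *m C)
  *m (C^T *m P *m A
      - C^T *m P *m B *m invmx (Ru + B^T *m P *m B) *m B^T *m P *m A).

Definition inOmega (zeta : R) (L : 'M[R]_(m2, d)) : Prop :=
  mx_ge (Q - L^T *m Rv *m L) (zeta%:M).

End Game.
End LQDefs.

From HB Require Import structures.
From mathcomp Require Import all_boot all_order all_algebra.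
From mathcomp Require Import sesquilinear spectral complex.
From mathcomp Require Import ring lra.
From Stdlib Require Import ClassicalEpsilon.
Set Implicit Arguments. Unset Strict Implicit. Unset Printing Implicit Defensive.
Import Order.TTheory GRing.Theory Num.Theory.
Local Open Scope ring_scope.

(* Write P = P_L^*, P' = P_{L'}^*, K = K(L), K' = K(L'), dL = L' - L,
   G = \tilde A_L - B K and M' = R^u + B^T P' B.  The defining equations of
   K and K' give the exact perturbation identity (Kof_perturbation)
        K' - K = M'^{-1} B^T ((P' - P) G - P' C dL).
   Since P' is positive definite, M' - R^u is positive semidefinite, hence
   |M'^{-1}| <= 1/sigma_min(R^u) (invmx_psd_shift).  With the Lipschitz
   bound |P' - P| <= B^P |dL| and |P'| <= |P| + |P' - P| this gives
   (Kof_lipschitz_step)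
        |K' - K| <= |B| |dL| / sigma_min(R^u) * (B^P |G| + |P||C| + B^P |C||dL|),
   and the smallness assumption on |dL| bounds the last summand by
   B^P |G| + |P||C| (smallness_bound), which yields the factor 2. *)

Section RealSpectral.
Variable R : rcfType.
Local Open Scope sesquilinear_scope.
Local Notation toC := (real_complex R).

Definition rdiag n (f : 'I_n -> R) : 'M[R[i]]_n := diag_mx (\row_i toC (f i)).

Lemma hermitian_real_diag n (S : 'M[R[i]]_n) : S \is hermsymmx ->
  exists P (f : 'I_n -> R),
    [/\ P^t* *m P = 1%:M, P *m P^t* = 1%:M & S = P^t* *m rdiag f *m P].
Proof.
move=> Sh; have := hermitian_spectral_diag_real Sh.
set P := spectralmx S; set D := spectral_diag S => /mxOverP Dreal.
have PU : P \is unitarymx := spectral_unitarymx S.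
exists P, (fun i => complex.Re (D 0 i)); split.
- by have := mulmxKtV (1%:M) PU (erefl _); rewrite mul1mx.
- exact/unitarymxP.
rewrite -invmx_unitary //.
have -> : rdiag (fun i => complex.Re (D 0 i)) = diag_mx D.
  by congr diag_mx; apply/matrixP => i j; rewrite ord1 mxE RRe_real.
exact/orthomx_spectralP/hermitian_normalmx.
Qed.

Lemma rdiag_eigvec n (P : 'M[R[i]]_n) (f : 'I_n -> R) k :
  P *m P^t* = 1%:M -> let u : 'cV_n := P^t* *m delta_mx k 0 in
  u != 0 /\ P^t* *m rdiag f *m P *m u = toC (f k) *: u.
Proof.
move=> PPt u; split.
  apply/eqP => u0; have : P *m u = delta_mx k 0 :> 'cV_n by rewrite mulmxA PPt mul1mx.
  rewrite u0 mulmx0 => /matrixP /(_ k 0); rewrite !mxE !eqxx /=.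
  by move/eqP; rewrite eq_sym oner_eq0.
rewrite -!mulmxA (mulmxA P) PPt mul1mx.
have -> : rdiag f *m delta_mx k 0 = toC (f k) *: delta_mx k 0 :> 'cV_n.
  apply/matrixP => i j; rewrite mul_diag_mx !mxE.
  by case: (eqVneq i k) => [->|_] /=; rewrite ?mulr1 // !mulr0.
by rewrite -scalemxAr.
Qed.

Lemma rdiag_rayleigh n (P : 'M[R[i]]_n) (f : 'I_n -> R) k :
  P^t* *m P = 1%:M -> (forall i, f i <= f k) -> forall x : 'cV_n,
  (x^t* *m (P^t* *m rdiag f *m P) *m x) 0 0 <= toC (f k) * (x^t* *m x) 0 0.
Proof.
move=> PtP kmax x; pose y := P *m x.
have yt : x^t* *m P^t* = y^t* by rewrite /y trmx_mul map_mxM.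
have -> : x^t* *m (P^t* *m rdiag f *m P) *m x = y^t* *m rdiag f *m y.
  by rewrite !mulmxA yt -!mulmxA.
have -> : x^t* *m x = y^t* *m y by rewrite -yt -mulmxA (mulmxA _ P) PtP mul1mx.
rewrite !mxE mulr_sumr; apply: ler_sum => i _; rewrite mul_mx_diag !mxE.
set z := (\sum_j _); rewrite (mulrC z^*) -mulrA; apply: ler_wpM2r.
  by rewrite mulrC mul_conjC_ge0.
by rewrite lecR kmax.
Qed.

Lemma sym_rayleigh_top n (S : 'M[R]_n.+1) : S^T = S ->
  exists lam, (exists2 u : 'cV[R[i]]_n.+1, u != 0 & map_mx toC S *m u = toC lam *: u)
    /\ forall x : 'cV_n.+1, (x^T *m S *m x) 0 0 <= lam * (x^T *m x) 0 0.
Proof.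
move=> Ssym; have SCh : map_mx toC S \is hermsymmx.
  apply/is_hermitianmxP; rewrite expr0 scale1r; apply/matrixP => i j.
  by rewrite !mxE -{1}Ssym mxE conj_Creal // complex_real.
have [P [f [PtP PPt SE]]] := hermitian_real_diag SCh.
pose k := [arg max_(k > ord0) f k]%O.
have kmax i : f i <= f k by rewrite /k; case: arg_maxP => // j _; apply.
exists (f k); split.
  have [u0 Su] := rdiag_eigvec f k PPt.
  by rewrite SE; exists (P^t* *m delta_mx k 0 : 'cV_n.+1).
move=> x; have := rdiag_rayleigh PtP kmax (map_mx toC x); rewrite -SE.
have xr : (map_mx toC x)^t* = (map_mx toC x)^T.
  by apply/matrixP=> i j; rewrite !mxE conj_Creal // complex_real.
by rewrite xr -lecR rmorphM /= map_trmx -!map_mxM !mxE.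
Qed.

Lemma Re_realM (a : R) (z : R[i]) : complex.Re (toC a * z) = a * complex.Re z.
Proof. by case: z => x y /=; rewrite mul0r subr0. Qed.

Lemma Im_realM (a : R) (z : R[i]) : complex.Im (toC a * z) = a * complex.Im z.
Proof. by case: z => x y /=; rewrite mul0r addr0. Qed.

Lemma real_part_eigen n (S : 'M[R]_n) (f : R[i] -> R) (lam : R)
    (u : 'cV[R[i]]_n) :
  {morph f : x y / x + y} -> (forall a z, f (toC a * z) = a * f z) ->
  map_mx toC S *m u = toC lam *: u -> S *m map_mx f u = lam *: map_mx f u.
Proof.
move=> fD fZ Su; have f0 : f 0 = 0 by have := fZ 0 0; rewrite mulr0 mul0r.
apply/matrixP => i j; rewrite !mxE.
have := congr1 (fun M : 'cV_n => f (M i j)) Su; rewrite /= !mxE fZ => <-.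
rewrite (big_morph f fD f0); apply: eq_bigr => l _.
by rewrite !mxE fZ.
Qed.

Lemma sym_top_eigen n (S : 'M[R]_n.+1) : S^T = S ->
  exists lam (v : 'cV[R]_n.+1), [/\ v != 0, S *m v = lam *: v &
   forall x : 'cV_n.+1, (x^T *m S *m x) 0 0 <= lam * (x^T *m x) 0 0].
Proof.
move=> /sym_rayleigh_top [lam [[u u0 Su] Hq]]; exists lam.
have ReD (x y : R[i]) : complex.Re (x + y) = complex.Re x + complex.Re y.
  by case: x y => [? ?] [? ?].
have ImD (x y : R[i]) : complex.Im (x + y) = complex.Im x + complex.Im y.
  by case: x y => [? ?] [? ?].
have Sa := real_part_eigen ReD Re_realM Su.
have Sb := real_part_eigen ImD Im_realM Su.
have [a0|] := eqVneq (map_mx (@complex.Re R) u) 0;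
  last by exists (map_mx (@complex.Re R) u).
exists (map_mx (@complex.Im R) u); split => //; apply/eqP => b0; move/eqP: u0; apply.
apply/matrixP => i j; move/matrixP: a0 => /(_ i j); move/matrixP: b0 => /(_ i j).
by rewrite !mxE; case: (u i j) => re im /= -> ->.
Qed.

End RealSpectral.

Lemma ler_cancel_sqr (R : realFieldType) (c t v : R) :
  0 <= v -> 0 <= t -> c * v ^+ 2 <= v * t -> c * v <= t.
Proof.
move=> v0 t0; have [->|vn0] := eqVneq v 0; first by rewrite mulr0.
have vp : 0 < v by rewrite lt_def vn0 v0.
by move=> H; rewrite -(ler_pM2l vp) (_ : v * (c * v) = c * v ^+ 2) //; ring.
Qed.

Section Euclid.
Variable R : rcfType.

Definition sqnorm n (x : 'cV[R]_n) : R := \sum_i (x i 0) ^+ 2.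
Definition dotv n (x y : 'cV[R]_n) : R := \sum_i x i 0 * y i 0.

Lemma dotvE n (x y : 'cV[R]_n) : (x^T *m y) 0 0 = dotv x y.
Proof. by rewrite mxE; apply: eq_bigr => i _; rewrite mxE. Qed.

Lemma sqnorm_dotv n (x : 'cV[R]_n) : sqnorm x = dotv x x.
Proof. by apply: eq_bigr => i _; rewrite expr2. Qed.

Lemma sqnorm_ge0 n (x : 'cV[R]_n) : 0 <= sqnorm x.
Proof. by apply: sumr_ge0 => i _; rewrite sqr_ge0. Qed.

Lemma sqnorm_gt0 n (x : 'cV[R]_n) : x != 0 -> 0 < sqnorm x.
Proof.
move=> x0; rewrite lt_def sqnorm_ge0 andbT; apply: contra x0 => /eqP/psumr_eq0P H.
apply/eqP/matrixP => i j; rewrite ord1 mxE.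
by apply/eqP; rewrite -sqrf_eq0; apply/eqP/H => // k _; rewrite sqr_ge0.
Qed.

Lemma vnormE n (x : 'cV[R]_n) : vnorm x = Num.sqrt (sqnorm x).
Proof. by []. Qed.

Lemma vnorm_ge0 n (x : 'cV[R]_n) : 0 <= vnorm x.
Proof. exact: sqrtr_ge0. Qed.

Lemma vnorm_sqr n (x : 'cV[R]_n) : vnorm x ^+ 2 = sqnorm x.
Proof. by rewrite sqr_sqrtr // sqnorm_ge0. Qed.

Lemma vnorm_gt0 n (x : 'cV[R]_n) : x != 0 -> 0 < vnorm x.
Proof. by move=> x0; rewrite sqrtr_gt0 sqnorm_gt0. Qed.

Lemma vnormZ n (c : R) (x : 'cV[R]_n) : vnorm (c *: x) = `|c| * vnorm x.
Proof.
rewrite !vnormE.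
have -> : sqnorm (c *: x) = c ^+ 2 * sqnorm x.
  by rewrite /sqnorm mulr_sumr; apply: eq_bigr => i _; rewrite mxE exprMn.
by rewrite sqrtrM ?sqr_ge0 // sqrtr_sqr.
Qed.

Lemma vnorm0 n : vnorm (0 : 'cV[R]_n) = 0.
Proof. by rewrite -(scale0r (0 : 'cV[R]_n)) vnormZ normr0 mul0r. Qed.

Lemma sqnorm_comb n (p q : R) (x y : 'cV[R]_n) :
  sqnorm (p *: x + q *: y) = p ^+ 2 * sqnorm x + 2 * p * q * dotv x y + q ^+ 2 * sqnorm y.
Proof.
rewrite /sqnorm /dotv !mulr_sumr -!big_split /=; apply: eq_bigr => i _.
by rewrite !mxE /GRing.scale /=; ring.
Qed.

(* Cauchy-Schwarz, via the nonnegativity of |<y,y> x - <x,y> y|^2; it gives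
   the triangle inequality. *)
Lemma cauchy_schwarz n (x y : 'cV[R]_n) : dotv x y ^+ 2 <= sqnorm x * sqnorm y.
Proof.
have [->|y0] := eqVneq y 0.
  rewrite /dotv big1 ?expr0n ?mulr_ge0 ?sqnorm_ge0 // => i _.
  by rewrite mxE mulr0.
have ny := sqnorm_gt0 y0.
have := sqnorm_ge0 (sqnorm y *: x + (- dotv x y) *: y); rewrite sqnorm_comb.
have -> : sqnorm y ^+ 2 * sqnorm x + 2 * sqnorm y * - dotv x y * dotv x y
          + (- dotv x y) ^+ 2 * sqnorm y
        = sqnorm y * (sqnorm x * sqnorm y - dotv x y ^+ 2) by ring.
by rewrite pmulr_rge0 // subr_ge0.
Qed.

Lemma dotv_le n (x y : 'cV[R]_n) : dotv x y <= vnorm x * vnorm y.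
Proof.
apply: le_trans (ler_norm _) _.
rewrite -(@ler_pXn2r _ 2) // ?nnegrE ?mulr_ge0 ?vnorm_ge0 //.
by rewrite real_normK ?num_real // exprMn !vnorm_sqr cauchy_schwarz.
Qed.

Lemma vnormD n (x y : 'cV[R]_n) : vnorm (x + y) <= vnorm x + vnorm y.
Proof.
rewrite -(@ler_pXn2r _ 2) // ?nnegrE ?addr_ge0 ?vnorm_ge0 //.
have := sqnorm_comb 1 1 x y; rewrite !scale1r !expr1n !mul1r !mulr1 => E.
by rewrite vnorm_sqr E sqrrD !vnorm_sqr -mulr_natr; have := dotv_le x y; lra.
Qed.

Lemma vnormB n (x y : 'cV[R]_n) : vnorm (x - y) <= vnorm x + vnorm y.
Proof.
by rewrite -[vnorm y]mul1r -normrN1 -vnormZ scaleN1r; apply: vnormD.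
Qed.

(* If [c |x|^2 <= <x, y>] then [c |x| <= |y|]: the way lower bounds on
   quadratic forms become lower bounds on norms. *)
Lemma vnorm_lb_of_dotv n (c : R) (x y : 'cV[R]_n) :
  c * sqnorm x <= dotv x y -> c * vnorm x <= vnorm y.
Proof.
move=> H; apply: ler_cancel_sqr; rewrite ?vnorm_ge0 // vnorm_sqr.
exact: le_trans H (dotv_le x y).
Qed.

End Euclid.

Section SpectralNorm.
Variable R : rcfType.

(* The spectral norm exists: it is the square root of the top eigenvalue of
   [A^T A]. *)
Lemma opnorm_exists m n (A : 'M[R]_(m, n)) : (0 < n)%N ->
  exists2 c, is_opnorm A c & 0 <= c.
Proof.
case: n A => // n A _.
have Ssym : (A^T *m A)^T = A^T *m A by rewrite trmx_mul trmxK.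
have [lam [v [v0 Sv Hb]]] := sym_top_eigen Ssym.
have qfE (x : 'cV_n.+1) : (x^T *m (A^T *m A) *m x) 0 0 = sqnorm (A *m x).
  by rewrite sqnorm_dotv -dotvE trmx_mul !mulmxA.
have nv := sqnorm_gt0 v0.
have Hv : sqnorm (A *m v) = lam * sqnorm v.
  by rewrite -qfE -mulmxA Sv -scalemxAr mxE dotvE -sqnorm_dotv.
have l0 : 0 <= lam by rewrite -(pmulr_lge0 _ nv) -Hv sqnorm_ge0.
exists (Num.sqrt lam); last exact: sqrtr_ge0.
split=> [x|c' Hc'].
  rewrite !vnormE -sqrtrM // ler_wsqrtr //.
  by have := Hb x; rewrite qfE dotvE -sqnorm_dotv.
have := Hc' v; rewrite [vnorm (A *m v)]vnormE Hv sqrtrM // -vnormE.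
by rewrite ler_pM2r // vnorm_gt0.
Qed.

Lemma opnormP m n (A : 'M[R]_(m, n)) : (0 < n)%N ->
  is_opnorm A (opnorm A) /\ 0 <= opnorm A.
Proof.
move=> n0; have [c Hc c0] := opnorm_exists A n0.
rewrite /opnorm; case: excluded_middle_informative => [H|[]]; last by exists c.
case: constructive_indefinite_description => c1 /= Hc1; split => //.
exact: le_trans c0 (proj2 Hc _ (proj1 Hc1)).
Qed.

Lemma opnorm_bound m n (A : 'M[R]_(m, n)) x : (0 < n)%N ->
  vnorm (A *m x) <= opnorm A * vnorm x.
Proof. by move=> n0; case: (opnormP A n0) => [[H _] _]; apply: H. Qed.

Lemma opnorm_le m n (A : 'M[R]_(m, n)) c : (0 < n)%N ->
  (forall x, vnorm (A *m x) <= c * vnorm x) -> opnorm A <= c.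
Proof. by move=> n0; case: (opnormP A n0) => [[_ H] _]; apply: H. Qed.

Lemma opnorm_ge0 m n (A : 'M[R]_(m, n)) : (0 < n)%N -> 0 <= opnorm A.
Proof. by move=> n0; case: (opnormP A n0). Qed.

Lemma opnormM m n p (A : 'M[R]_(m, n)) (B : 'M[R]_(n, p)) :
  (0 < n)%N -> (0 < p)%N -> opnorm (A *m B) <= opnorm A * opnorm B.
Proof.
move=> n0 p0; apply: opnorm_le => // x; rewrite -mulmxA -mulrA.
apply: le_trans (opnorm_bound _ _ n0) _.
by rewrite ler_wpM2l ?opnorm_ge0 ?opnorm_bound.
Qed.

Lemma opnormD m n (A B : 'M[R]_(m, n)) : (0 < n)%N ->
  opnorm (A + B) <= opnorm A + opnorm B.
Proof.
move=> n0; apply: opnorm_le => // x; rewrite mulmxDl mulrDl.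
by apply: le_trans (vnormD _ _) _; rewrite lerD ?opnorm_bound.
Qed.

Lemma opnormB m n (A B : 'M[R]_(m, n)) : (0 < n)%N ->
  opnorm (A - B) <= opnorm A + opnorm B.
Proof.
move=> n0; apply: opnorm_le => // x; rewrite mulmxBl mulrDl.
by apply: le_trans (vnormB _ _) _; rewrite lerD ?opnorm_bound.
Qed.

Lemma opnorm_tr m n (A : 'M[R]_(m, n)) : (0 < m)%N -> (0 < n)%N ->
  opnorm A^T <= opnorm A.
Proof.
move=> m0 n0; apply: opnorm_le => // x; set w := A^T *m x.
have Ew : sqnorm w = dotv (A *m w) x.
  by rewrite sqnorm_dotv -!dotvE {2}/w mulmxA -trmx_mul.
rewrite -[vnorm w]mul1r; apply: ler_cancel_sqr;
  rewrite ?mulr_ge0 ?opnorm_ge0 ?vnorm_ge0 //.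
rewrite mul1r vnorm_sqr Ew mulrA (mulrC (vnorm w)).
apply: le_trans (dotv_le _ _) _.
by apply: ler_wpM2r; [exact: vnorm_ge0 | exact: opnorm_bound].
Qed.

End SpectralNorm.

Section SmallestSingularValue.
Variable R : rcfType.

Lemma qf_dotv n (P : 'M[R]_n) x : qf P x = dotv x (P *m x).
Proof. by rewrite /qf -mulmxA dotvE. Qed.

Lemma posdef_qf_ge0 n (P : 'M[R]_n) x : posdef P -> 0 <= qf P x.
Proof.
move=> [_ HP]; have [->|x0] := eqVneq x 0; last exact/ltW/HP.
by rewrite /qf mulmx0 mxE.
Qed.

(* For a positive definite matrix, [sigmin] is its smallest eigenvalue: it is
   positive and bounds the quadratic form from below. *)
Lemma sigmin_posdef n (Ru : 'M[R]_n) : (0 < n)%N -> posdef Ru ->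
  0 < sigmin Ru /\ forall x, sigmin Ru * sqnorm x <= qf Ru x.
Proof.
case: n Ru => // n Ru _ HRu.
have Ssym : (- Ru)^T = - Ru by rewrite linearN /= (proj1 HRu).
have [lam [w [w0 Sw Hb]]] := sym_top_eigen Ssym.
set mu := - lam.
have Rw : Ru *m w = mu *: w by rewrite scaleNr -Sw mulNmx opprK.
have Hq x : mu * sqnorm x <= qf Ru x.
  have := Hb x; rewrite mulmxN mulNmx mxE dotvE -sqnorm_dotv -/(qf Ru x).
  by rewrite /mu; lra.
have mu0 : 0 < mu.
  have := (proj2 HRu) w w0.
  rewrite qf_dotv Rw -dotvE -scalemxAr mxE dotvE -sqnorm_dotv.
  by rewrite pmulr_lgt0 // sqnorm_gt0.
have Hs : is_sigmin Ru mu.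
  split=> [x|c' Hc']; first by apply: vnorm_lb_of_dotv; rewrite -qf_dotv.
  have := Hc' w; rewrite Rw vnormZ gtr0_norm //.
  by rewrite ler_pM2r // vnorm_gt0.
suff -> : sigmin Ru = mu by [].
rewrite /sigmin; case: excluded_middle_informative => [H|[]]; last by exists mu.
case: constructive_indefinite_description => c1 /= Hc1.
by apply/eqP; rewrite eq_le (proj2 Hs _ (proj1 Hc1)) (proj2 Hc1 _ (proj1 Hs)).
Qed.

Lemma invmx_psd_shift n (Ru X : 'M[R]_n) : (0 < n)%N -> posdef Ru ->
  (forall y, 0 <= qf X y) ->
  Ru + X \in unitmx /\ opnorm (invmx (Ru + X)) <= (sigmin Ru)^-1.
Proof.
move=> n0 HRu HX; have [mu0 Hq] := sigmin_posdef n0 HRu.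
set mu := sigmin Ru in mu0 Hq *.
have Hy y : mu * vnorm y <= vnorm ((Ru + X) *m y).
  apply: vnorm_lb_of_dotv; rewrite -qf_dotv.
  have -> : qf (Ru + X) y = qf Ru y + qf X y by rewrite /qf mulmxDr mulmxDl mxE.
  by rewrite ler_wpDr.
have Mu : Ru + X \in unitmx.
  rewrite unitmxE unitfE -det_tr; apply/negP => /det0P [v v0 Hv].
  have := Hy v^T; rewrite -[Ru + X]trmxK -trmx_mul Hv trmx0 vnorm0.
  by apply/negP; rewrite -ltNge pmulr_rgt0 // vnorm_gt0 // trmx_eq0.
split=> //; apply: opnorm_le => // z.
by rewrite mulrC ler_pdivlMr // mulrC -{2}(mulKVmx Mu z).
Qed.

End SmallestSingularValue.

Section GainPerturbation.
Variables (R : rcfType) (d m1 m2 : nat).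
Variables (A : 'M[R]_d) (B : 'M[R]_(d, m1)) (C : 'M[R]_(d, m2)) (Ru : 'M[R]_m1).
Hypothesis HRu : posdef Ru.

Local Notation K := (Kof A B C Ru).

Lemma gain_denominator (P : 'M[R]_d) : (0 < m1)%N -> posdef P ->
  Ru + B^T *m P *m B \in unitmx /\
  opnorm (invmx (Ru + B^T *m P *m B)) <= (sigmin Ru)^-1.
Proof.
move=> m10 HP; apply: invmx_psd_shift => // y.
by rewrite (_ : qf _ y = qf P (B *m y)) ?posdef_qf_ge0 // /qf trmx_mul !mulmxA.
Qed.

Lemma Kof_perturbation (P P' : 'M[R]_d) (L L' : 'M[R]_(m2, d)) :
  Ru + B^T *m P *m B \in unitmx -> Ru + B^T *m P' *m B \in unitmx ->
  K P' L' - K P L = invmx (Ru + B^T *m P' *m B) *m (B^T *m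
    ((P' - P) *m (Atil A C L - B *m K P L) - P' *m (C *m (L' - L)))).
Proof.
set M := Ru + B^T *m P *m B; set M' := Ru + B^T *m P' *m B => Mu M'u.
have MK : M *m K P L = B^T *m P *m Atil A C L.
  by rewrite /Kof -/M -!mulmxA mulKVmx.
have AtilE : Atil A C L' = Atil A C L - C *m (L' - L).
  by rewrite /Atil mulmxBr opprB addrA subrK.
have M'K' : M' *m K P' L' = B^T *m P' *m (Atil A C L - C *m (L' - L)).
  by rewrite /Kof -/M' -!mulmxA mulKVmx // AtilE.
have M'E : M' = M + B^T *m (P' - P) *m B.
  by rewrite /M' /M mulmxBr mulmxBl addrA addrAC addrK.
rewrite -[LHS](mulKmx M'u); congr (_ *m _).
rewrite mulmxBr M'K' M'E mulmxDl MK.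
move: (Atil A C L) (K P L) (C *m (L' - L)) => At K0 W.
rewrite !(mulmxBr, mulmxBl) !mulmxA opprD addrA.
by rewrite -!addrA; congr (_ + _); rewrite addrC -addrA.
Qed.

Lemma Kof_lipschitz_step (P P' : 'M[R]_d) (L L' : 'M[R]_(m2, d)) (BP : R) :
  (0 < d)%N -> (0 < m1)%N -> (0 < m2)%N -> posdef P -> posdef P' ->
  opnorm (P' - P) <= BP * opnorm (L' - L) ->
  opnorm (K P' L' - K P L) <=
    opnorm B * opnorm (L' - L) / sigmin Ru *
    (BP * opnorm (Atil A C L - B *m K P L) + opnorm P * opnorm C
     + BP * opnorm C * opnorm (L' - L)).
Proof.
move=> d0 m10 m20 HP HP' HPlip.
have [Mu _] := gain_denominator m10 HP.
have [M'u HM'] := gain_denominator m10 HP'.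
rewrite Kof_perturbation //.
set G := Atil A C L - B *m K P L; set dL := L' - L.
set b := opnorm B; set c := opnorm C; set p := opnorm P; set g := opnorm G.
set nL := opnorm dL; set q := opnorm (P' - P).
have [b0 c0 p0] : [/\ 0 <= b, 0 <= c & 0 <= p] by split; apply: opnorm_ge0.
have [g0 nL0] : 0 <= g /\ 0 <= nL by split; apply: opnorm_ge0.
have HP'n : opnorm P' <= p + q by rewrite -{1}(addrNK P P') addrC opnormD.
have HW : opnorm ((P' - P) *m G - P' *m (C *m dL)) <= q * g + (p + q) * (c * nL).
  apply: le_trans (opnormB _ _ _) _ => //; apply: lerD; first exact: opnormM.
  apply: le_trans (opnormM _ _ _ _) _ => //.
  apply: ler_pM; rewrite ?opnorm_ge0 //; exact: opnormM.
have HBW : opnorm (B^T *m ((P' - P) *m G - P' *m (C *m dL)))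
           <= b * (BP * nL * g + (p + BP * nL) * (c * nL)).
  apply: le_trans (opnormM _ _ _ _) _ => //.
  apply: ler_pM; rewrite ?opnorm_ge0 ?opnorm_tr //; apply: le_trans HW _.
  by rewrite lerD ?ler_wpM2r ?lerD2l ?mulr_ge0.
have -> : b * nL / sigmin Ru * (BP * g + p * c + BP * c * nL)
        = (sigmin Ru)^-1 * (b * (BP * nL * g + (p + BP * nL) * (c * nL))) by ring.
apply: le_trans (opnormM _ _ _ _) _ => //.
by apply: ler_pM; rewrite ?opnorm_ge0.
Qed.

End GainPerturbation.

(* The smallness condition |dL| <= b X / (BP b c) gives BP c |dL| <= X; when
   BP b c = 0 the condition forces dL = 0 (division by zero is zero). *)
Lemma smallness_bound (R : realFieldType) (BP b c X nL : R) :
  0 <= BP -> 0 <= b -> 0 <= c -> 0 <= X -> 0 <= nL ->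
  nL <= b * X / (BP * b * c) -> BP * c * nL <= X.
Proof.
move=> BP0 b0 c0 X0 nL0; have [De|Dn] := eqVneq (BP * b * c) 0.
  rewrite De invr0 mulr0 => nL_le0.
  by rewrite (_ : nL = 0) ?mulr0 //; apply/eqP; rewrite eq_le nL_le0 nL0.
have Dp : 0 < BP * b * c by rewrite lt_def Dn !mulr_ge0.
have bp : 0 < b.
  rewrite lt_def b0 andbT; apply/eqP => b_eq0.
  by move/eqP: Dn; apply; rewrite b_eq0 mulr0 mul0r.
rewrite ler_pdivlMr // => H; rewrite -(ler_pM2l bp).
by rewrite (_ : b * (BP * c * nL) = nL * (BP * b * c)) //; ring.
Qed.

Theorem mainTheorem17
  (R : rcfType) (d m1 m2 : nat)
  (A : 'M[R]_d) (B : 'M[R]_(d, m1)) (C : 'M[R]_(d, m2))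
  (Q : 'M[R]_d) (Ru : 'M[R]_m1) (Rv : 'M[R]_m2)
  (HQ : posdef Q) (HRu : posdef Ru) (HRv : posdef Rv)
  (* standing assumptions on the GARE *)
  (Pst : 'M[R]_d)
  (HPst : gare_minimal_pd A B C Q Ru Rv Pst)
  (HRvP : posdef (Rv - C^T *m Pst *m C))
  (HLst : posdef (Q - (Lstar A B C Ru Rv Pst)^T *m Rv *m Lstar A B C Ru Rv Pst))
  (zeta : R) (Hzeta0 : 0 < zeta)
  (Hzeta1 : zeta < sigmin (Q - (Lstar A B C Ru Rv Pst)^T *m Rv *m Lstar A B C Ru Rv Pst))
  (* P_L^* : the stabilizing solution of the Riccati equation, for L in Omega *)
  (PL : 'M[R]_(m2, d) -> 'M[R]_d)
  (HPL : forall L, inOmega Q Rv zeta L -> stabilizing_sol A B C Q Ru Rv L (PL L))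
  (* local Lipschitz constants of L |-> P_L^* on Omega *)
  (BL BP : R) (HBL : 0 < BL) (HBP : 0 < BP)
  (HLip : forall L L', inOmega Q Rv zeta L -> inOmega Q Rv zeta L' ->
     opnorm (L' - L) <= BL -> opnorm (PL L' - PL L) <= BP * opnorm (L' - L))
  (HB : B != 0) (HC : C != 0)
  (L L' : 'M[R]_(m2, d))
  (HL : inOmega Q Rv zeta L) (HL' : inOmega Q Rv zeta L')
  (Hclose : opnorm (L' - L) <=
     Num.min BL
       (opnorm B * (BP * opnorm (Atil A C L - B *m Kof A B C Ru (PL L) L)
                    + opnorm (PL L) * opnorm C)
        / (BP * opnorm B * opnorm C))) :
  opnorm (Kof A B C Ru (PL L') L' - Kof A B C Ru (PL L) L) <=
    2 * opnorm B * (BP * opnorm (Atil A C L - B *m Kof A B C Ru (PL L) L)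
                    + opnorm (PL L) * opnorm C)
      / sigmin Ru * opnorm (L' - L).
Proof.
(* B != 0 and C != 0 force d, m1, m2 > 0, where the norms are well behaved. *)
have dims_gt0 m n (M : 'M[R]_(m, n)) : M != 0 -> (0 < m)%N /\ (0 < n)%N.
  by case: m M => [|m] M; [rewrite flatmx0 eqxx | case: n M => // M; rewrite thinmx0 eqxx].
have [[d0 m10] [_ m20]] := (dims_gt0 _ _ B HB, dims_gt0 _ _ C HC).
move: Hclose; rewrite le_min => /andP [near_BL near_X].
have HPlip := HLip L L' HL HL' near_BL.
have Hstep := Kof_lipschitz_step A B C HRu d0 m10 m20 (HPL L HL).1 (HPL L' HL').1 HPlip.
apply: le_trans Hstep _.
set b := opnorm B in near_X *; set c := opnorm C in near_X *.
set X := _ + opnorm (PL L) * c in near_X *; set nL := opnorm (L' - L) in near_X *.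
have [b0 c0 nL0] : [/\ 0 <= b, 0 <= c & 0 <= nL] by split; apply: opnorm_ge0.
have X0 : 0 <= X by rewrite addr_ge0 ?mulr_ge0 ?opnorm_ge0 ?ltW.
have [mu0 _] := sigmin_posdef m10 HRu.
have Hgap := smallness_bound (ltW HBP) b0 c0 X0 nL0 near_X.
rewrite (_ : 2 * b * X / sigmin Ru * nL = b * nL / sigmin Ru * (X + X)); last by ring.
by apply: ler_wpM2l; [rewrite !mulr_ge0 // invr_ge0 ltW | rewrite lerD2l].
Qed.
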